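(* A rooted labeled forest that avoids $132$ avoids $2314$ if and only if it is a $P_1$-forest.
   Context: Rooted labeled forests are unordered forests with a distinguished root in each component and distinct integer labels $L(v)$. The ancestors of $v$ are the vertices on the path from the root of its component to $v$ (including $v$). An instance of a pattern $\pi$ of length $k$ is a sequence $v_1,\dots,v_k$ with $v_i$ a strict ancestor of $v_{i+1}$ and labels in the same relative order as $\pi$; a forest avoids $\pi$ if it has no instance. A vertex $v$ is a top-down minimum (TDM) if $L(u)\ge L(v)$ for every ancestor $u$ of $v$; other vertices are non-TDM. A non-TDM vertex $v$ is special if the path from the root to $v$ contains vertices $v_1,v_2,v_3,v_4$ in that order (not necessarily consecutive) with $v_1,v_3$ TDM and $v_2,v_4$ non-TDM. The ceiling of a special vertex $v$ is its lowest ancestor $u$ such that the path from $u$ to $v$ contains vertices $v_1,v_2,v_3,v_4$ in that order with $v_1,v_3$ TDM and $v_2,v_4$ non-TDM. A $P_1$-forest is a forest in which every special vertex $v$ with ceiling $u$ satisfies $L(u)>L(v)$. *)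

From mathcomp Require Import all_boot all_order all_algebra.
Set Implicit Arguments. Unset Strict Implicit. Unset Printing Implicit Defensive.
Import Order.TTheory GRing.Theory Num.Theory.
Local Open Scope ring_scope.

(* A rooted forest on a finite vertex type T is given by a parent function
   par : T -> option T (None = v is a root), with no cycles: iterating the
   parent map from any vertex eventually reaches None. *)

Section Forest.
Variable T : finType.
Variable par : T -> option T.

Definition up (k : nat) (v : T) : option T := iter k (obind par) (Some v).

Definition is_forest : Prop := forall v : T, exists k, up k v = None.

Definition ancestor (u v : T) : Prop := exists k, up k v = Some u.
Definition sancestor (u v : T) : Prop := exists k, up k.+1 v = Some u.

Variable L : T -> int.

Definition instance (pi : seq nat) (s : seq T) : Prop :=
  size s = size pi /\
  (forall i, i.+1 < size s -> forall x0, sancestor (nth x0 s i) (nth x0 s i.+1))%N /\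
  (forall i j, (i < size s)%N -> (j < size s)%N -> forall x0,
      (L (nth x0 s i) < L (nth x0 s j)) = (nth 0%N pi i < nth 0%N pi j)%N).

Definition avoids (pi : seq nat) : Prop := forall s, ~ instance pi s.

Definition TDM (v : T) : Prop := forall u, ancestor u v -> L v <= L u.

Definition has_TNTN_from (u v : T) : Prop :=
  exists v1 v2 v3 v4,
    [/\ ancestor u v1, sancestor v1 v2, sancestor v2 v3, sancestor v3 v4
      & ancestor v4 v] /\
    [/\ TDM v1, ~ TDM v2, TDM v3 & ~ TDM v4].

(* the path from the root to v contains such vertices: equivalently some
   ancestor u of v works (the root of v's component is an ancestor of all
   ancestors of v). *)
Definition special (v : T) : Prop :=
  ~ TDM v /\ exists u, ancestor u v /\ has_TNTN_from u v.

Definition ceiling (u v : T) : Prop :=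
  [/\ ancestor u v, has_TNTN_from u v &
      forall w, ancestor w v -> sancestor u w -> ~ has_TNTN_from w v].

Definition P1_forest : Prop :=
  forall v u, special v -> ceiling u v -> L v < L u.

End Forest.

From mathcomp Require Import all_boot all_order all_algebra.
From mathcomp Require Import boolp.
Import Order.TTheory GRing.Theory Num.Theory.
Local Open Scope ring_scope.
Set Implicit Arguments. Unset Strict Implicit.

(* The ceiling u of a special vertex v is TDM, and the path from u to v runs
   through a non-TDM v2 and then a TDM v3 with L v3 < L u < L v2: the TDM
   minimum above v2 must lie above u, since the ceiling is the lowest vertex
   starting such a pattern.  If L u < L v, then avoiding 132 forces
   L v2 < L v, and u, v2, v3, v is an instance of 2314.
   Conversely, let a, b, c, d be an instance of 2314 and let t and m be the
   minima of the root paths to a and c.  Avoiding 132 puts m strictly below b,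
   so t, b, m, d show that d is special; its ceiling lies below t, hence has
   label at most L t <= L a < L d, against the P1 condition. *)

Section Ancestors.

Variables (T : finType) (par : T -> option T).
Implicit Types u v w x y z : T.

Lemma up_add m n v : up par (m + n) v = obind (up par m) (up par n v).
Proof.
elim: m => [|m IH]; first by case: (up par n v).
move: IH; rewrite addSn /up iterS => ->.
by case: (iter n _ (Some v)) => //= y; rewrite iterS.
Qed.

Lemma up_trans m n x y z :
  up par m y = Some x -> up par n z = Some y -> up par (m + n) z = Some x.
Proof. by move=> Hm Hn; rewrite up_add Hn. Qed.

Lemma ancestor_refl x : ancestor par x x.
Proof. by exists 0%N. Qed.

Lemma sancestorW x y : sancestor par x y -> ancestor par x y.
Proof. by move=> [m Hm]; exists m.+1. Qed.

Lemma ancestor_trans x y z :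
  ancestor par x y -> ancestor par y z -> ancestor par x z.
Proof. by move=> [m Hm] [n Hn]; exists (m + n)%N; apply: up_trans Hm Hn. Qed.

Lemma sancestor_ancestor_trans x y z :
  sancestor par x y -> ancestor par y z -> sancestor par x z.
Proof. by move=> [m Hm] [n Hn]; exists (m + n)%N; apply: up_trans Hm Hn. Qed.

Lemma ancestor_sancestor_trans x y z :
  ancestor par x y -> sancestor par y z -> sancestor par x z.
Proof.
by move=> [m Hm] [n Hn]; exists (m + n)%N; rewrite -addnS; apply: up_trans Hm Hn.
Qed.

Lemma sancestor_trans x y z :
  sancestor par x y -> sancestor par y z -> sancestor par x z.
Proof. by move=> Sxy /sancestorW; apply: sancestor_ancestor_trans. Qed.

Lemma ancestorP x y : ancestor par x y -> x = y \/ sancestor par x y.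
Proof. by move=> [[|m] Hm]; [left; case: Hm | right; exists m]. Qed.

Lemma ancestor_total x y z :
  ancestor par x z -> ancestor par y z -> ancestor par x y \/ sancestor par y x.
Proof.
move=> [i Hi] [j Hj]; case: (leqP j i) => Hji.
  by left; exists (i - j)%N; rewrite -(subnK Hji) up_add Hj in Hi.
right; exists (j - i).-1; rewrite prednK ?subn_gt0 //.
by rewrite -(subnK (ltnW Hji)) up_add Hi in Hj.
Qed.

Hypothesis forest : is_forest par.

Lemma up_cycle k x : up par k.+1 x <> Some x.
Proof.
move=> Hx; have [n Hn] := forest x.
have Hiter q : up par (q * k.+1) x = Some x.
  by elim: q => [|q IH] //; rewrite mulSn; apply: up_trans Hx IH.
by move: (Hiter n); rewrite -(subnK (leq_pmulr n (ltn0Sn k))) up_add Hn.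
Qed.

Lemma sancestor_irrefl x : ~ sancestor par x x.
Proof. by move=> [k /up_cycle]. Qed.

Lemma sancestor_neq x y : sancestor par x y -> x <> y.
Proof. by move=> Sxy Exy; apply: (@sancestor_irrefl x); rewrite {2}Exy. Qed.

Lemma up_inj i j z x : up par i z = Some x -> up par j z = Some x -> i = j.
Proof.
wlog Hij : i j / (i <= j)%N.
  by move=> W Hi Hj; case: (leqP i j) => [/W|/ltnW/W]; [apply | move=> /(_ Hj Hi)].
move=> Hi Hj; case: (ltngtP i j) => // [Hlt|]; last by rewrite ltnNge Hij.
by move: Hj; rewrite -(subnK Hij) up_add Hi -(subnSK Hlt) => /up_cycle.
Qed.

Lemma lowest_ancestor (P : T -> Prop) v w :
  ancestor par w v -> P w ->
  exists u, [/\ ancestor par u v, P u &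
                forall w', ancestor par w' v -> sancestor par u w' -> ~ P w'].
Proof.
move=> [k Hk]; elim/ltn_ind: k w Hk => k IH w Hk Pw.
have [[w' [[j Hj] [i Hi] Pw']]|Hlow] :=
  EM (exists w', [/\ ancestor par w' v, sancestor par w w' & P w']).
  apply: (IH j _ w' Hj Pw').
  by rewrite (up_inj Hk (up_trans Hi Hj)) addSn ltnS leq_addl.
exists w; split => [|//|w' Aw' Sw' Pw']; first by exists k.
by apply: Hlow; exists w'.
Qed.

End Ancestors.

Section Labels.

Variables (T : finType) (par : T -> option T) (L : T -> int).
Hypotheses (forest : is_forest par) (L_inj : injective L).
Implicit Types u v w x y z : T.

Lemma sancestor_L_neq x y : sancestor par x y -> L x != L y.
Proof. by move=> /(sancestor_neq forest) Nxy; apply/eqP => /L_inj. Qed.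

Lemma TDM_sancestor_lt x y : TDM par L y -> sancestor par x y -> L y < L x.
Proof.
move=> Ty Sxy; rewrite lt_neqAle eq_sym sancestor_L_neq //.
exact/Ty/sancestorW.
Qed.

Lemma not_TDM_of_lt x y : ancestor par x y -> L x < L y -> ~ TDM par L y.
Proof. by move=> Axy Lxy /(_ x Axy); rewrite leNgt Lxy. Qed.

Lemma not_TDM v : ~ TDM par L v -> exists2 w, ancestor par w v & L w < L v.
Proof.
move=> /existsNP [w /not_implyP [Awv /negP]]; rewrite -ltNge.
by exists w.
Qed.

Lemma min_ancestor v :
  exists m, [/\ ancestor par m v, TDM par L m &
                forall w, ancestor par w v -> L m <= L w].
Proof.
have [m /asboolP Amv minm] := @extremumP _ _ <=%R v
  (fun w => `[< ancestor par w v >]) L le_refl le_trans le_total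
  (asboolT (ancestor_refl par v)).
have {}minm w : ancestor par w v -> L m <= L w by move=> /asboolP /minm.
by exists m; split=> // w Awm; apply/minm/(ancestor_trans Awm).
Qed.

Lemma not_TDM_min_ancestor v : ~ TDM par L v ->
  exists m, [/\ sancestor par m v, TDM par L m & L m < L v].
Proof.
move=> /not_TDM [w Awv Lwv]; have [m [Amv Tm minm]] := min_ancestor v.
have Lmv : L m < L v := le_lt_trans (minm w Awv) Lwv.
exists m; split=> //; case: (ancestorP Amv) => // Emv.
by move: Lmv; rewrite Emv ltxx.
Qed.

Lemma ceiling_exists w v : ancestor par w v -> has_TNTN_from par L w v ->
  exists u, ceiling par L u v.
Proof.
exact: (lowest_ancestor forest (P := has_TNTN_from par L ^~ v)).
Qed.

Lemma ceiling_below u v w : ceiling par L u v ->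
  ancestor par w v -> has_TNTN_from par L w v -> ancestor par w u.
Proof.
move=> [Auv _ low] Awv Hw.
by case: (ancestor_total Awv Auv) => // Suw; case: (low w Awv Suw Hw).
Qed.

Lemma ceiling_TNTN u v : ceiling par L u v ->
  exists v2 v3 v4,
    [/\ sancestor par u v2, sancestor par v2 v3, sancestor par v3 v4
      & ancestor par v4 v] /\
    [/\ TDM par L u, ~ TDM par L v2, TDM par L v3 & ~ TDM par L v4].
Proof.
move=> [_ [v1 [v2 [v3 [v4 [[Au1 S12 S23 S34 A4v] Hv]]]]] low].
have [->|Su1] := ancestorP Au1; first by exists v2, v3, v4.
have S1v : sancestor par v1 v.
  exact: sancestor_trans S12 (sancestor_trans S23 (sancestor_ancestor_trans S34 A4v)).
case: (low v1 (sancestorW S1v) Su1).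
by exists v1, v2, v3, v4; split=> //; split=> //; apply: ancestor_refl.
Qed.

Lemma ceiling_pattern u v : ceiling par L u v ->
  exists v2 v3,
    [/\ sancestor par u v2, sancestor par v2 v3 & sancestor par v3 v] /\
    L v3 < L u < L v2.
Proof.
move=> Cuv; have [v2 [v3 [v4 [[Su2 S23 S34 A4v] [Tu N2 T3 N4]]]]] := ceiling_TNTN Cuv.
have S3v := sancestor_ancestor_trans S34 A4v.
exists v2, v3; split=> //; rewrite (TDM_sancestor_lt T3 (sancestor_trans Su2 S23)) /=.
have [m [Sm2 Tm Lm2]] := not_TDM_min_ancestor N2.
have Hm : has_TNTN_from par L m v.
  by exists m, v2, v3, v4; split=> //; split=> //; apply: ancestor_refl.
have Amv : ancestor par m v.
  exact/sancestorW/(sancestor_trans Sm2)/(sancestor_trans S23).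
exact: le_lt_trans (Tu m (ceiling_below Cuv Amv Hm)) Lm2.
Qed.

Lemma instance_of_order pi s : uniq pi -> size s = size pi ->
  (forall i, (i.+1 < size s)%N -> forall x0,
      sancestor par (nth x0 s i) (nth x0 s i.+1)) ->
  (forall i j, (i < size s)%N -> (j < size s)%N ->
      (nth 0%N pi i < nth 0%N pi j)%N -> forall x0,
      L (nth x0 s i) < L (nth x0 s j)) ->
  instance par L pi s.
Proof.
move=> Upi Hs Hchain Hord; split=> //; split=> // i j Hi Hj x0.
case: (ltngtP (nth 0%N pi i) (nth 0%N pi j)) => Hij.
- by rewrite Hord.
- by apply/negbTE; rewrite -leNgt ltW // Hord.
- rewrite Hs in Hi Hj.
  by move/eqP: Hij; rewrite (nth_uniq 0%N Hi Hj Upi) => /eqP ->; rewrite ltxx.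
Qed.

Lemma avoids_132 x y z : avoids par L [:: 1; 3; 2]%N ->
  sancestor par x y -> sancestor par y z -> ~ (L x < L z < L y).
Proof.
move=> H132 Sxy Syz /andP[Lxz Lzy]; apply: (H132 [:: x; y; z]).
apply: instance_of_order => //; first by move=> [|[|i]].
have Lxy := lt_trans Lxz Lzy.
by move=> [|[|[|i]]] [|[|[|j]]].
Qed.

Lemma avoids_2314P : avoids par L [:: 2; 3; 1; 4]%N <->
  (forall a b c d, sancestor par a b -> sancestor par b c -> sancestor par c d ->
     ~ [/\ L c < L a, L a < L b & L b < L d]).
Proof.
split=> [H2314 a b c d Sab Sbc Scd [Lca Lab Lbd]|Hno s [Hs [Hchain Hord]]].
  apply: (H2314 [:: a; b; c; d]); apply: instance_of_order => //.
    by move=> [|[|[|i]]].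
  have Lcb := lt_trans Lca Lab; have Lad := lt_trans Lab Lbd.
  have Lcd := lt_trans Lcb Lbd.
  by move=> [|[|[|[|i]]]] [|[|[|[|j]]]].
case: s Hs Hchain Hord => [|a [|b [|c [|d [|? ?]]]]] // _ Hchain Hord.
apply: (Hno a b c d (Hchain 0%N isT a) (Hchain 1%N isT a) (Hchain 2%N isT a)).
by rewrite (Hord 2%N 0%N) ?(Hord 0%N 1%N) ?(Hord 1%N 3%N).
Qed.

Section Avoiding132.

Hypothesis avoids132 : avoids par L [:: 1; 3; 2]%N.

Lemma avoids_132_below y z m : sancestor par y z -> L z < L y ->
  ancestor par m z -> L m <= L z -> sancestor par y m.
Proof.
move=> Syz Lzy Amz Lmz; case: (ancestor_total Amz (sancestorW Syz)) => // Amy.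
have Smy : sancestor par m y.
  case: (ancestorP Amy) => // Emy.
  by move: (le_lt_trans Lmz Lzy); rewrite Emy ltxx.
have Lmz' : L m < L z.
  by rewrite lt_neqAle (sancestor_L_neq (sancestor_trans Smy Syz)).
by case: (avoids_132 avoids132 Smy Syz); rewrite Lmz' Lzy.
Qed.

Lemma P1_forest_of_avoids_2314 :
  avoids par L [:: 2; 3; 1; 4]%N -> P1_forest par L.
Proof.
move=> /avoids_2314P H2314 v u _ Cuv.
have [v2 [v3 [[Su2 S23 S3v] /andP[L3u Lu2]]]] := ceiling_pattern Cuv.
have S2v := sancestor_trans S23 S3v.
have Suv := sancestor_trans Su2 S2v.
rewrite ltNge le_eqVlt (negbTE (sancestor_L_neq Suv)) /=.
apply/negP => Luv.
have L2v : L v2 < L v.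
  rewrite lt_neqAle sancestor_L_neq //= leNgt; apply/negP => Lv2.
  by apply: (avoids_132 avoids132 Su2 S2v); rewrite Luv.
exact: (H2314 u v2 v3 v Su2 S23 S3v).
Qed.

Lemma avoids_2314_of_P1_forest :
  P1_forest par L -> avoids par L [:: 2; 3; 1; 4]%N.
Proof.
move=> HP1; apply/avoids_2314P => a b c d Sab Sbc Scd [Lca Lab Lbd].
have [t [Ata Tt mint]] := min_ancestor a.
have [m [Amc Tm minm]] := min_ancestor c.
have Sbm := avoids_132_below Sbc (lt_trans Lca Lab) Amc (minm c (ancestor_refl par c)).
have Sad := sancestor_trans Sab (sancestor_trans Sbc Scd).
have Nd := not_TDM_of_lt (sancestorW Sad) (lt_trans Lab Lbd).
have Htd : has_TNTN_from par L t d.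
  exists t, b, m, d; split; split=> //; try exact: ancestor_refl.
  - exact: ancestor_sancestor_trans Ata Sab.
  - exact: ancestor_sancestor_trans Amc Scd.
  - exact: not_TDM_of_lt (sancestorW Sab) Lab.
have Atd := ancestor_trans Ata (sancestorW Sad).
have [u Cud] := ceiling_exists Atd Htd.
have [_ [_ [_ [_ [Tu _ _ _]]]]] := ceiling_TNTN Cud.
have := HP1 d u (conj Nd (ex_intro _ t (conj Atd Htd))) Cud.
apply/negP; rewrite -leNgt (le_trans (Tu t (ceiling_below Cud Atd Htd))) //.
exact: le_trans (mint a (ancestor_refl par a)) (ltW (lt_trans Lab Lbd)).
Qed.

End Avoiding132.

End Labels.

Theorem lemma3p10 (T : finType) (par : T -> option T) (L : T -> int)
  (Hforest : is_forest par) (HL : injective L) :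
  avoids par L [:: 1; 3; 2]%N ->
  (avoids par L [:: 2; 3; 1; 4]%N <-> P1_forest par L).
Proof.
move=> H132; split; first exact: (P1_forest_of_avoids_2314 Hforest HL H132).
exact: (avoids_2314_of_P1_forest Hforest HL H132).
Qed.
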